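(* Let $\mathcal G=(G,\pi_G,c_G)$ and $\mathcal H=(H,\pi_H,c_H)$ be in $\mathrm{LiftPMod}(\mathbb B,\mathcal C)$, and let $\varphi:\mathcal G\to\mathcal H$ be a morphism of lifted perceptrons. Then for all $w_G\in\mathrm{Param}(\mathcal G)$ and $w_H\in\mathrm{Param}(\mathcal H)$, if $w_G=\varphi^*w_H$ (i.e. $(w_G)_e=(w_H)_{\varphi(e)}$ for all $e\in E_G$), then $\mathcal F_{\mathcal G}(w_G,\cdot)=\varphi^*\circ\mathcal F_{\mathcal H}(w_H,\cdot)$, i.e. $[\mathcal F_{\mathcal G}(w_G,x)]_v=[\mathcal F_{\mathcal H}(w_H,x)]_{\varphi(v)}$ for every input $x\in\prod_{u\in\mathcal C}\mathcal Y_{p_{\mathcal C}(u)}$ and every $v\in V_G$.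
   Context: Graphs: $G=(V,E)$, $V$ finite, $E\subseteq V\times V$; $G(-,v)=\{u:(u,v)\in E\}$. A homomorphism $\varphi:G\to H$ maps vertices with $(u,v)\in E_G\Rightarrow(\varphi(u),\varphi(v))\in E_H$, and acts on edges by $\varphi(u,v)=(\varphi(u),\varphi(v))$. A fibration is a homomorphism such that for each $v\in V_G$ the restriction $G(-,v)\to H(-,\varphi(v))$ is a bijection. A Euclidean bundle over a finite set is a family of finite-dimensional real inner product spaces indexed by it. A perceptron module over a finite DAG $B=(V_B,E_B)$ is $\mathbb B=((I_B,T_B),(\mathcal Y,\mathcal Z,\mathcal W),(M,\sigma))$: $I_B\subseteq V_B$ (vertices without parents), $T_B\subseteq V_B$, bundles $\mathcal Y$ over $V_B$, $\mathcal Z,\mathcal W$ over $E_B$, maps $M_{(u,v)}:\mathcal W_{(u,v)}\times\mathcal Y_u\to\mathcal Z_{(u,v)}$ and $\sigma_v:\prod_{u\in B(-,v)}\mathcal Z_{(u,v)}\to\mathcal Y_v$ for $v\notin I_B$. Fix such $\mathbb B$, a finite set $\mathcal C$ and $p_{\mathcal C}:\mathcal C\to I_B$. $\mathrm{LiftPMod}(\mathbb B,\mathcal C)$: triples $(G,\pi,c)$ with $G=(V_G,E_G)$ a graph, $\pi:G\to B$ a homomorphism, $c:\pi^{-1}(I_B)\to\mathcal C$ injective with $p_{\mathcal C}\circ c=\pi$ on $\pi^{-1}(I_B)$. $\mathrm{Param}(\mathcal G)=\prod_{e\in E_G}\mathcal W_{\pi(e)}$. Forward function: $\mathcal F_{\mathcal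 G}(w,x)=f\in\prod_{v\in V_G}\mathcal Y_{\pi(v)}$ with $f_v=x_{c(v)}$ if $\pi(v)\in I_B$, and otherwise $f_v=\sigma_{\pi(v)}((\sum_{u\in G(-,v)\cap\pi^{-1}(a)}M_{\pi(u,v)}(w_{(u,v)},f_u))_{a\in B(-,\pi(v))})$, defined inductively (G is acyclic). A morphism of lifted perceptrons $\varphi:(G,\pi_G,c_G)\to(H,\pi_H,c_H)$ is a fibration $\varphi:G\to H$ with $\pi_G=\pi_H\circ\varphi$ and $c_G=c_H\circ\varphi$ (on input vertices). *)

From HB Require Import structures.
From mathcomp Require Import all_boot all_order all_algebra.
From mathcomp Require Import reals.
Set Implicit Arguments. Unset Strict Implicit. Unset Printing Implicit Defensive.
Import GRing.Theory.
Local Open Scope ring_scope.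

(* Euclidean bundles: a finite-dimensional real inner product space is
   represented (up to isometry) by 'rV[R]_d; a bundle is a dimension function.
   Bundles over edges are indexed by all vertex pairs; only values on edges
   are ever used. *)

Definition acyclic (V : finType) (E : rel V) : Prop :=
  forall (v : V) (p : seq V), p != [::] -> path E v p -> last v p != v.

Record PMod (R : realType) (VB : finType) := {
  pm_E : rel VB;
  pm_acyclic : acyclic pm_E;
  pm_I : {set VB};
  pm_T : {set VB};
  pm_I_noparent : forall i u, i \in pm_I -> ~~ pm_E u i;
  pm_dY : VB -> nat;
  pm_dZ : VB -> VB -> nat;
  pm_dW : VB -> VB -> nat;
  pm_M : forall a b : VB, 'rV[R]_(pm_dW a b) -> 'rV[R]_(pm_dY a) -> 'rV[R]_(pm_dZ a b);
  (* sigma_b : prod_{a in B(-,b)} Z_(a,b) -> Y_b  (the argument is a family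
     indexed by all a; in the forward function it is 0 off the parents) *)
  pm_sigma : forall b : VB, (forall a : VB, 'rV[R]_(pm_dZ a b)) -> 'rV[R]_(pm_dY b);
}.

(* Element (G, pi, c) of LiftPMod(B, C); c is a total function whose values
   matter only on pi^{-1}(I_B). *)
Record LiftPMod (R : realType) (VB : finType) (B : PMod R VB)
    (C : finType) (pC : C -> VB) := {
  lp_V : finType;
  lp_E : rel lp_V;
  lp_pi : lp_V -> VB;
  lp_c : lp_V -> C;
  lp_hom : forall u v, lp_E u v -> pm_E B (lp_pi u) (lp_pi v);
  lp_c_inj : forall u v, lp_pi u \in pm_I B -> lp_pi v \in pm_I B ->
               lp_c u = lp_c v -> u = v;
  lp_c_compat : forall v, lp_pi v \in pm_I B -> pC (lp_c v) = lp_pi v;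
}.

Arguments lp_E {R VB B C pC} l _ _.
Arguments lp_pi {R VB B C pC} l _.
Arguments lp_c {R VB B C pC} l _.

Section Forward.
Variables (R : realType) (VB : finType) (B : PMod R VB) (C : finType) (pC : C -> VB).
Variable G : LiftPMod B pC.

(* Param(G) = prod_{e in E_G} W_{pi(e)} (values off edges are irrelevant) *)
Definition Param := forall u v : lp_V G, 'rV[R]_(pm_dW B (lp_pi G u) (lp_pi G v)).
Definition Input := forall i : C, 'rV[R]_(pm_dY B (pC i)).
Definition Output := forall v : lp_V G, 'rV[R]_(pm_dY B (lp_pi G v)).

(* conform_mx 0 A is the identity cast when the dimensions agree (which they
   do at every use below, by the compatibility conditions). *)
Definition fwd_step (w : Param) (x : Input) (f : Output) : Output :=
  fun v =>
    if lp_pi G v \in pm_I B then conform_mx 0 (x (lp_c G v))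
    else pm_sigma (fun a : VB =>
           \sum_(u | lp_E G u v && (lp_pi G u == a))
              conform_mx 0 (pm_M (w u v) (f u))).

(* The inductive (well-founded, G being acyclic) definition of the forward
   function, realized as #|V_G| iterations of the defining equations
   (longest paths in G have fewer than #|V_G| edges). *)
Definition forward (w : Param) (x : Input) : Output :=
  iter #|lp_V G| (fwd_step w x) (fun v => 0).

End Forward.

Record LPMorph (R : realType) (VB : finType) (B : PMod R VB)
    (C : finType) (pC : C -> VB) (G H : LiftPMod B pC) := {
  lm_map :> lp_V G -> lp_V H;
  lm_hom : forall u v, lp_E G u v -> lp_E H (lm_map u) (lm_map v);
  lm_fib_inj : forall v u1 u2, lp_E G u1 v -> lp_E G u2 v ->
                 lm_map u1 = lm_map u2 -> u1 = u2;
  lm_fib_surj : forall v u', lp_E H u' (lm_map v) ->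
                 exists2 u, lp_E G u v & lm_map u = u';
  lm_pi : forall v, lp_pi G v = lp_pi H (lm_map v);
  lm_c : forall v, lp_pi G v \in pm_I B -> lp_c G v = lp_c H (lm_map v);
}.

(* Each iterate of the defining equations of the forward function commutes
   with pullback along phi: at an input vertex both sides read the same input
   (c_G = c_H o phi), and at any other vertex v the fibration property puts the
   edges into v in bijection with the edges into phi v, so the pre-activation
   sums agree term by term.  As G and H are acyclic, no walk of #|V| edges
   exists, so the iteration defining each forward function is stationary from
   #|V| steps on; computing both sides with max(#|V_G|, #|V_H|) iterations
   gives the result. *)
From HB Require Import structures.
From mathcomp Require Import all_boot all_order all_algebra.
From mathcomp Require Import reals.
From Stdlib Require Import FunctionalExtensionality.
Local Open Scope ring_scope.
Import GRing.Theory.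

Section ConformMx.
Variable K : nmodType.

Lemma conform_mx0 m n m' n' : conform_mx (0 : 'M[K]_(m', n')) (0 : 'M_(m, n)) = 0.
Proof.
have [<-|ne] := eqVneq m m'; last by rewrite nonconform_mx ?ne.
have [<-|ne] := eqVneq n n'; last by rewrite nonconform_mx ?ne ?orbT.
exact: conform_mx_id.
Qed.

Lemma conform_mxD m n m' n' (A B : 'M[K]_(m, n)) :
  conform_mx (0 : 'M_(m', n')) (A + B) = conform_mx 0 A + conform_mx 0 B.
Proof.
have [<-|ne] := eqVneq m m'; last by rewrite !nonconform_mx ?ne ?addr0.
have [<-|ne] := eqVneq n n'; last by rewrite !nonconform_mx ?ne ?orbT ?addr0.
by rewrite !conform_mx_id.
Qed.

Lemma conform_mx_sum m n m' n' (I : finType) (P : pred I)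
    (F : I -> 'M[K]_(m, n)) :
  conform_mx (0 : 'M_(m', n')) (\sum_(i | P i) F i) =
  \sum_(i | P i) conform_mx 0 (F i).
Proof.
exact: (big_morph _ (@conform_mxD m n m' n') (@conform_mx0 m n m' n')).
Qed.

Lemma conform_mx_comp m1 n1 m2 n2 m3 n3 (A : 'M[K]_(m1, n1)) :
  m2 = m3 -> n2 = n3 ->
  conform_mx (0 : 'M_(m3, n3)) (conform_mx (0 : 'M_(m2, n2)) A) = conform_mx 0 A.
Proof. by move=> <- <-; rewrite conform_mx_id. Qed.

End ConformMx.

Arguments conform_mx_comp {K m1 n1 m2 n2 m3 n3 A}.

Section Walks.
Variables (T : finType) (E : rel T).

Fixpoint walk_into (k : nat) (v : T) : Prop :=
  if k is k'.+1 then exists2 u, E u v & walk_into k' u else True.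

Lemma walk_intoP k v :
  walk_into k v -> exists u p, [/\ size p = k, path E u p & last u p = v].
Proof.
elim: k v => [|k IH] v /=; first by exists v, [::].
case=> w Ewv /IH [u [p [<- Pp lastp]]].
exists u, (rcons p v); split; first by rewrite size_rcons.
  by rewrite rcons_path Pp lastp.
by rewrite last_rcons.
Qed.

Hypothesis acyclicE : acyclic E.

Lemma acyclic_path_uniq u p : path E u p -> uniq (u :: p).
Proof.
elim: p u => [|y p IH] u // /[dup] Pyp /andP [_ /IH uniq_yp].
rewrite cons_uniq uniq_yp andbT; apply/negP => u_in.
move: Pyp; case/splitPr: u_in => s1 s2.
rewrite cat_path => /andP [Ps1 /= /andP [Eu _]].
have loop : path E u (rcons s1 u) by rewrite rcons_path Ps1.
have loop_nil : rcons s1 u != [::] by case: (s1).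
by have := acyclicE _ _ loop_nil loop; rewrite last_rcons eqxx.
Qed.

Lemma acyclic_no_walk_card v : ~ walk_into #|T| v.
Proof.
case/walk_intoP=> u [p [sz Pp _]].
have := max_card (mem (u :: p)).
by rewrite (card_uniqP (acyclic_path_uniq _ _ Pp)) /= sz ltnn.
Qed.

End Walks.

Arguments walk_into {T} E k v.

Lemma acyclic_hom (V W : finType) (E : rel V) (E' : rel W) (f : V -> W) :
  (forall u v, E u v -> E' (f u) (f v)) -> acyclic E' -> acyclic E.
Proof.
move=> homf acE' v p p_nil Pp; apply/negP => /eqP loop.
have Pfp : path E' (f v) (map f p).
  by elim: p v {p_nil loop} Pp => //= y p IH v /andP [/homf -> /IH].
have fp_nil : map f p != [::] by case: p {Pp Pfp loop} p_nil.
by have := acE' _ _ fp_nil Pfp; rewrite last_map loop eqxx.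
Qed.

Arguments acyclic_hom {V W E E' f}.

Lemma sum_fibration (V W : finType) (E : rel V) (E' : rel W) (f : V -> W)
    (M : nmodType) (P : pred W) (F : W -> M) v :
  (forall u, E u v -> E' (f u) (f v)) ->
  (forall u1 u2, E u1 v -> E u2 v -> f u1 = f u2 -> u1 = u2) ->
  (forall u', E' u' (f v) -> exists2 u, E u v & f u = u') ->
  \sum_(u | E u v && P (f u)) F (f u) = \sum_(u' | E' u' (f v) && P u') F u'.
Proof.
move=> homf injf surjf.
rewrite (partition_big f (fun u' => E' u' (f v) && P u')); last first.
  by move=> u /andP [/homf -> ->].
apply: eq_bigr => u' /andP [/surjf [u Euv <-] Pfu].
rewrite (big_pred1 u) // => u1 /=.
apply/idP/eqP => [/andP [/andP [Eu1v _] /eqP]|->]; first exact: injf.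
by rewrite Euv Pfu eqxx.
Qed.

Arguments sum_fibration {V W E E' f M P F v}.

Section Perceptrons.
Variables (R : realType) (VB : finType) (B : PMod R VB).
Variables (C : finType) (pC : C -> VB).

Lemma pm_sigma_conform b1 b2 (g1 : forall a, 'rV[R]_(pm_dZ B a b1))
    (g2 : forall a, 'rV[R]_(pm_dZ B a b2)) :
  b1 = b2 -> (forall a, g1 a = conform_mx 0 (g2 a)) ->
  pm_sigma g1 = conform_mx 0 (pm_sigma g2).
Proof.
move=> b12 g12; subst b2; rewrite conform_mx_id; congr pm_sigma.
by apply: functional_extensionality_dep => a; rewrite g12 conform_mx_id.
Qed.

Lemma pm_M_conform a1 a1' a2 a2' n (W : 'rV[R]_(pm_dW B a1' a2'))
    (Y : 'rV[R]_(pm_dY B a1')) :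
  a1 = a1' -> a2 = a2' ->
  conform_mx (0 : 'rV_n) (@pm_M _ _ B a1 a2 (conform_mx 0 W) (conform_mx 0 Y)) =
  conform_mx 0 (pm_M W Y).
Proof. by move=> -> ->; rewrite !conform_mx_id. Qed.

Lemma lp_acyclic (G : LiftPMod B pC) : acyclic (lp_E G).
Proof. exact: acyclic_hom (@lp_hom _ _ _ _ _ G) (@pm_acyclic _ _ B). Qed.

Section Forward.
Variables (G : LiftPMod B pC) (w : Param G) (x : Input B pC).

Lemma iter_fwd_step_stable k m v :
  ~ walk_into (lp_E G) k v -> (k <= m)%N ->
  iter m (fwd_step w x) (fun _ => 0) v = iter k (fwd_step w x) (fun _ => 0) v.
Proof.
elim: k m v => [|k IH] [|m] v no_walk //= le_km; first by case: no_walk.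
rewrite /fwd_step; case: ifP => // _; congr pm_sigma.
apply: functional_extensionality_dep => a; apply: eq_bigr => u /andP [Euv _].
by rewrite IH // => walk_u; apply: no_walk; exists u.
Qed.

Lemma forward_iter m v :
  (#|lp_V G| <= m)%N -> forward w x v = iter m (fwd_step w x) (fun _ => 0) v.
Proof.
move=> le_Gm; apply/esym/iter_fwd_step_stable => //.
exact: acyclic_no_walk_card (lp_acyclic G) v.
Qed.

End Forward.

Section Pullback.
Variables (G H : LiftPMod B pC) (phi : LPMorph G H).
Variables (wG : Param G) (wH : Param H) (x : Input B pC).
Hypothesis wG_pullback :
  forall u v : lp_V G, lp_E G u v -> wG u v = conform_mx 0 (wH (phi u) (phi v)).

Lemma fwd_step_pullback (fG : Output G) (fH : Output H) :
  (forall u, fG u = conform_mx 0 (fH (phi u))) ->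
  forall v, fwd_step wG x fG v = conform_mx 0 (fwd_step wH x fH (phi v)).
Proof.
move=> fG_pullback v; rewrite /fwd_step.
have I_phi : (lp_pi H (phi v) \in pm_I B) = (lp_pi G v \in pm_I B).
  by rewrite (lm_pi phi).
have dY_phi : pm_dY B (lp_pi H (phi v)) = pm_dY B (lp_pi G v).
  by rewrite (lm_pi phi).
rewrite I_phi; case: ifP => Iv.
  by rewrite (lm_c phi Iv) (conform_mx_comp erefl dY_phi).
apply: pm_sigma_conform; first exact: lm_pi.
move=> a; have dZ_phi : pm_dZ B a (lp_pi H (phi v)) = pm_dZ B a (lp_pi G v).
  by rewrite (lm_pi phi).
rewrite conform_mx_sum.
under [RHS]eq_bigr => u' _ do rewrite (conform_mx_comp erefl dZ_phi).
rewrite -(sum_fibration (E := lp_E G) (f := phi)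
            (P := fun u' => lp_pi H u' == a)); first last.
- exact: lm_fib_surj.
- exact: lm_fib_inj.
- by move=> u /(lm_hom phi).
apply: eq_big => [u | u /andP [Euv _]]; first by rewrite (lm_pi phi).
by rewrite wG_pullback // fG_pullback; apply: pm_M_conform; apply: lm_pi.
Qed.

Lemma iter_fwd_step_pullback k v :
  iter k (fwd_step wG x) (fun _ => 0) v =
  conform_mx 0 (iter k (fwd_step wH x) (fun _ => 0) (phi v)).
Proof.
elim: k v => [|k IH] v /=; first by rewrite conform_mx0.
exact: fwd_step_pullback.
Qed.

End Pullback.
End Perceptrons.

Arguments forward_iter {R VB B C pC G w x m v}.

Theorem proposition3 (R : realType) (VB : finType) (B : PMod R VB)
    (C : finType) (pC : C -> VB) (G H : LiftPMod B pC) (phi : LPMorph G H)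
    (wG : Param G) (wH : Param H) :
  (forall u v : lp_V G, lp_E G u v -> wG u v = conform_mx 0 (wH (phi u) (phi v))) ->
  forall (x : Input B pC) (v : lp_V G),
    forward wG x v = conform_mx 0 (forward wH x (phi v)).
Proof.
move=> wG_pullback x v.
rewrite (forward_iter (leq_maxl #|lp_V G| #|lp_V H|)).
rewrite (forward_iter (leq_maxr #|lp_V G| #|lp_V H|)).
exact: iter_fwd_step_pullback.
Qed.
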